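(* Let $\theta_N=1+N^{-2/3}w_N$ with $w_N>0$, $(\log\log N)^2/w_N\to0$ and $w_N/(\log N)^2\to0$. For $1\le i\le N$ let $r_i=1+\sqrt{1-\frac{i-1}{N\theta_N^2}}$, $m_i=1-\sqrt{1-\frac{i-1}{N\theta_N^2}}$, $\gamma_i=m_i/r_i$; for $2\le i\le N$ let $\delta_i=\frac{m_i}{r_i}-\frac{m_i}{r_{i-1}}$, and for $3\le i\le N$ let \[ T_{\delta i}=\delta_i+\gamma_i\delta_{i-1}+\gamma_i\gamma_{i-1}\delta_{i-2}+\dots+\gamma_i\gamma_{i-1}\cdots\gamma_4\delta_3. \] Then, for large enough $N$, \[ \sum_{i=3}^NT_{\delta i}=\frac16\log N+O(\log\log N). \] *)

From Stdlib Require Import Reals.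
From Coquelicot Require Import Coquelicot.
Open Scope R_scope.

Fixpoint rsum (f : nat -> R) (n : nat) : R :=
  match n with O => 0 | S n' => rsum f n' + f n' end.
Fixpoint rprod (f : nat -> R) (n : nat) : R :=
  match n with O => 1 | S n' => rprod f n' * f n' end.

(* sum_{k=a}^{b} f k  (empty, = 0, if b < a) *)
Definition sum_range (a b : nat) (f : nat -> R) : R :=
  rsum (fun t => f (a + t)%nat) (b + 1 - a).
(* prod_{k=a}^{b} f k  (empty, = 1, if b < a) *)
Definition prod_range (a b : nat) (f : nat -> R) : R :=
  rprod (fun t => f (a + t)%nat) (b + 1 - a).

Section Defs.
Variables (w : nat -> R) (N : nat).

Definition theta : R := 1 + Rpower (INR N) (-(2/3)) * w N.

Definition sq_i (i : nat) : R :=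
  sqrt (1 - (INR i - 1) / (INR N * theta ^ 2)).
Definition r_ (i : nat) : R := 1 + sq_i i.
Definition m_ (i : nat) : R := 1 - sq_i i.
Definition gamma_ (i : nat) : R := m_ i / r_ i.
Definition delta_ (i : nat) : R := m_ i / r_ i - m_ i / r_ (i - 1).

(* T_{delta i} = sum_{k=3}^{i} (prod_{j=k+1}^{i} gamma_j) delta_k *)
Definition T_delta (i : nat) : R :=
  sum_range 3 i (fun k => prod_range (k + 1) i gamma_ * delta_ k).

Definition total_T : R := sum_range 3 N T_delta.
End Defs.

From Stdlib Require Import Reals Lra Lia Psatz.
From Coquelicot Require Import Coquelicot.
Open Scope R_scope.

(* Put a = 1 / (N θ^2) and s_i = sqrt (1 - (i - 1) a), so that s_(i-1)^2 = s_i^2 + a,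
   γ_i = (1 - s_i) / (1 + s_i) and δ_i = (1 - γ_i) u_i with
   u_i = (1 - s_i) (s_(i-1) - s_i) / (2 s_i (1 + s_(i-1)))  ([target]).
   Hence T_(δ i) = (1 - γ_i) u_i + γ_i T_(δ,i-1) is a moving average of the nondecreasing
   sequence u: it stays below u_i, and its total lag Σ (u_i - T_(δ i)) is at most
   u_N / (1 - γ_N) <= a / (4 s_N^3), which is at most 1/4 because w_N >= 1 makes
   N^2 (θ - 1)^3 = w_N^3 >= 1.  Comparing u_i with the increments of (1/2) ln s_i telescopes
   Σ u_i to -(1/2) ln s_N + O(1).  Finally s_N^2 θ^2 = θ^2 - 1 + 1/N is of order
   θ - 1 = N^(-2/3) w_N, so -(1/2) ln s_N = (1/6) ln N - (1/4) ln w_N + O(1), and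
   0 <= ln w_N <= 2 ln ln N by the growth conditions on w_N. *)

Lemma ln_le_sub_1 x : 0 < x -> ln x <= x - 1.
Proof. intro Hx. pose proof (exp_ineq1_le (ln x)) as H. rewrite exp_ln in H by lra. lra. Qed.

Lemma ln_ge_1_sub_inv x : 0 < x -> 1 - / x <= ln x.
Proof.
  intro Hx. pose proof (ln_le_sub_1 (/ x) (Rinv_0_lt_compat _ Hx)) as H.
  rewrite ln_Rinv in H by lra. lra.
Qed.

Lemma rsum_ext f g n : (forall t, (t < n)%nat -> f t = g t) -> rsum f n = rsum g n.
Proof.
  induction n as [|n IH]; intro H; cbn; [lra|].
  rewrite IH, H by (intros; try apply H; lia). lra.
Qed.

Lemma rsum_le f g n : (forall t, (t < n)%nat -> f t <= g t) -> rsum f n <= rsum g n.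
Proof.
  induction n as [|n IH]; intro H; cbn; [lra|].
  pose proof (IH ltac:(intros; apply H; lia)). pose proof (H n ltac:(lia)). lra.
Qed.

Lemma rsum_scal c f n : rsum (fun t => c * f t) n = c * rsum f n.
Proof. induction n as [|n IH]; cbn; [lra|]. rewrite IH. lra. Qed.

Lemma rsum_minus f g n : rsum (fun t => f t - g t) n = rsum f n - rsum g n.
Proof. induction n as [|n IH]; cbn; [lra|]. rewrite IH. lra. Qed.

Lemma sum_range_empty a f : sum_range (S a) a f = 0.
Proof. unfold sum_range. now replace (a + 1 - S a)%nat with 0%nat by lia. Qed.

Lemma sum_range_S a n f : (a <= S n)%nat ->
  sum_range a (S n) f = sum_range a n f + f (S n).
Proof.
  intro H. unfold sum_range. replace (S n + 1 - a)%nat with (S (n + 1 - a)) by lia.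
  cbn [rsum]. do 2 f_equal. lia.
Qed.

Lemma sum_range_ext a n f g : (forall i, (a <= i <= n)%nat -> f i = g i) ->
  sum_range a n f = sum_range a n g.
Proof. intro H. apply rsum_ext. intros t Ht. apply H. lia. Qed.

Lemma sum_range_le a n f g : (forall i, (a <= i <= n)%nat -> f i <= g i) ->
  sum_range a n f <= sum_range a n g.
Proof. intro H. apply rsum_le. intros t Ht. apply H. lia. Qed.

Lemma sum_range_scal a n c f : sum_range a n (fun i => c * f i) = c * sum_range a n f.
Proof. apply rsum_scal. Qed.

Lemma sum_range_minus a n f g :
  sum_range a n (fun i => f i - g i) = sum_range a n f - sum_range a n g.
Proof. apply rsum_minus. Qed.

Lemma sum_range_telescope F a n : (a <= n)%nat ->
  sum_range (S a) n (fun i => F (pred i) - F i) = F a - F n.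
Proof.
  induction 1 as [|n Hn IH].
  - rewrite sum_range_empty. lra.
  - rewrite sum_range_S, IH by lia. change (pred (S n)) with n. lra.
Qed.

Lemma sum_range_telescope_le f F a n : (a <= n)%nat ->
  (forall i, (a < i <= n)%nat -> f i <= F (pred i) - F i) ->
  sum_range (S a) n f <= F a - F n.
Proof.
  intros Han H. rewrite <- sum_range_telescope by exact Han.
  apply sum_range_le. intros. apply H. lia.
Qed.

Lemma sum_range_telescope_ge f F a n : (a <= n)%nat ->
  (forall i, (a < i <= n)%nat -> F (pred i) - F i <= f i) ->
  F a - F n <= sum_range (S a) n f.
Proof.
  intros Han H. rewrite <- sum_range_telescope by exact Han.
  apply sum_range_le. intros. apply H. lia.
Qed.

Lemma prod_range_empty n g : prod_range (n + 1) n g = 1.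
Proof. unfold prod_range. now rewrite Nat.sub_diag. Qed.

Lemma prod_range_S a n g : (a <= S n)%nat ->
  prod_range a (S n) g = prod_range a n g * g (S n).
Proof.
  intro H. unfold prod_range. replace (S n + 1 - a)%nat with (S (n + 1 - a)) by lia.
  cbn [rprod]. do 2 f_equal. lia.
Qed.

Lemma sum_prod_range_S g d a i : (a <= S i)%nat ->
  sum_range a (S i) (fun k => prod_range (k + 1) (S i) g * d k)
  = d (S i) + g (S i) * sum_range a i (fun k => prod_range (k + 1) i g * d k).
Proof.
  intro H. rewrite sum_range_S, prod_range_empty, <- sum_range_scal by exact H.
  rewrite Rplus_comm, Rmult_1_l. f_equal. apply sum_range_ext. intros k Hk.
  rewrite prod_range_S by lia. ring.
Qed.

Section MovingAverage.
Variables (u c T : nat -> R) (g : R) (n0 N : nat).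
Hypothesis T_start : T n0 = 0.
Hypothesis T_step : forall i, (n0 <= i < N)%nat ->
  T (S i) = (1 - c (S i)) * u (S i) + c (S i) * T i.
Hypothesis c_range : forall i, (n0 < i <= N)%nat -> 0 <= c i <= g.
Hypothesis g_le_1 : g <= 1.
Hypothesis u_nonneg : forall i, (n0 < i <= N)%nat -> 0 <= u i.
Hypothesis u_mono : forall i, (n0 < i < N)%nat -> u i <= u (S i).

Lemma average_le_target i : (n0 < i <= N)%nat -> T i <= u i.
Proof.
  induction i as [|i IH]; intro Hi; [lia|].
  rewrite T_step by lia. destruct (c_range (S i) ltac:(lia)).
  destruct (Nat.eq_dec i n0) as [->|Hne].
  - rewrite T_start. pose proof (u_nonneg (S n0) ltac:(lia)). nra.
  - pose proof (IH ltac:(lia)). pose proof (u_mono i ltac:(lia)). nra.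
Qed.

Lemma lag_sum_invariant n : (n0 < n <= N)%nat ->
  (1 - g) * sum_range (S n0) n (fun i => u i - T i) + g * (u n - T n) <= u n.
Proof.
  induction n as [|n IH]; intro Hn; [lia|].
  destruct (c_range (S n) ltac:(lia)) as [c0 cg].
  assert (lag_step : u (S n) - T (S n) = c (S n) * (u (S n) - T n))
    by (rewrite T_step by lia; ring).
  rewrite sum_range_S, lag_step by lia.
  destruct (Nat.eq_dec n n0) as [->|Hne].
  - rewrite sum_range_empty, T_start. pose proof (u_nonneg (S n0) ltac:(lia)). nra.
  - pose proof (IH ltac:(lia)) as IHn.
    pose proof (average_le_target n ltac:(lia)). pose proof (u_mono n ltac:(lia)).
    assert (c (S n) * (u (S n) - T n) <= g * (u (S n) - u n) + g * (u n - T n)) by nra.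
    nra.
Qed.

Lemma lag_sum_le : (n0 < N)%nat ->
  (1 - g) * sum_range (S n0) N (fun i => u i - T i) <= u N.
Proof.
  intro HN. pose proof (lag_sum_invariant N ltac:(lia)).
  pose proof (average_le_target N ltac:(lia)). destruct (c_range N ltac:(lia)). nra.
Qed.

End MovingAverage.

Definition gam (x : R) : R := (1 - x) / (1 + x).

Definition target (s p : R) : R := (1 - s) * (p - s) / (2 * s * (1 + p)).

Lemma gam_range x y : 0 < y <= x -> x <= 1 -> 0 <= gam x <= gam y.
Proof.
  intros Hy Hx. unfold gam. split.
  - apply Rmult_le_pos; [lra|]. apply Rlt_le, Rinv_0_lt_compat. lra.
  - apply Rmult_le_reg_r with ((1 + x) * (1 + y)); [nra|].
    field_simplify; nra.
Qed.

Lemma one_sub_gam x : 0 < x -> 1 - gam x = 2 * x / (1 + x).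
Proof. intro. unfold gam. field. lra. Qed.

Lemma delta_as_average s p : 0 < s -> 0 < p ->
  gam s - (1 - s) / (1 + p) = (1 - gam s) * target s p.
Proof. intros. unfold gam, target. field. lra. Qed.

Lemma target_nonneg s p : 0 < s <= 1 -> s <= p -> 0 <= target s p.
Proof.
  intros. unfold target. apply Rmult_le_pos; [nra|].
  apply Rlt_le, Rinv_0_lt_compat. nra.
Qed.

Lemma target_le_half s p : 0 < s -> s <= p -> target s p <= (p - s) / (2 * s).
Proof.
  intros. unfold target. apply Rmult_le_reg_r with (2 * s * (1 + p)); [nra|].
  field_simplify; nra.
Qed.

Lemma target_le_log s p : 0 < s -> s <= p ->
  target s p <= / 2 * (ln p - ln s) + (p ^ 2 - s ^ 2) / 8 * (/ s ^ 2 - / p ^ 2).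
Proof.
  intros Hs Hsp.
  assert (Hlog : 1 - s / p <= ln p - ln s).
  { rewrite <- ln_div by lra. replace (1 - s / p) with (1 - / (p / s)) by (field; lra).
    apply ln_ge_1_sub_inv. apply Rdiv_lt_0_compat; lra. }
  assert (Hgap : (p ^ 2 - s ^ 2) / 8 * (/ s ^ 2 - / p ^ 2)
                 - ((p - s) / (2 * s) - / 2 * (1 - s / p))
                 = (p - s) ^ 4 / (8 * s ^ 2 * p ^ 2)) by (field; lra).
  assert (0 <= (p - s) ^ 4 / (8 * s ^ 2 * p ^ 2)).
  { apply Rmult_le_pos; [apply pow_le; lra|].
    apply Rlt_le, Rinv_0_lt_compat.
    pose proof (pow_lt s 2 Hs). pose proof (pow_lt p 2 ltac:(lra)). nra. }
  pose proof (target_le_half s p Hs Hsp). lra.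
Qed.

Lemma target_ge_log s p : 0 < s -> s <= p <= 2 * s ->
  / 2 * (ln p - ln s) - 3 / 2 * (p - s) <= target s p.
Proof.
  intros Hs Hsp.
  assert (Hlog : ln p - ln s <= (p - s) / s).
  { rewrite <- ln_div by lra. replace ((p - s) / s) with (p / s - 1) by (field; lra).
    apply ln_le_sub_1. apply Rdiv_lt_0_compat; lra. }
  assert (Hgap : (p - s) / (2 * s) - target s p = (p - s) * (p + s) / (2 * s * (1 + p)))
    by (unfold target; field; lra).
  assert ((p - s) * (p + s) / (2 * s * (1 + p)) <= 3 / 2 * (p - s)).
  { apply Rle_div_l; [nra|].
    replace (3 / 2 * (p - s) * (2 * s * (1 + p))) with ((p - s) * (3 * s * (1 + p))) by field.
    apply Rmult_le_compat_l; nra. }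
  assert ((p - s) / (2 * s) = / 2 * ((p - s) / s)) by (field; lra).
  lra.
Qed.

Lemma target_antimono s' s p : 0 < s' <= s -> s <= 1 -> s <= p -> p - s <= s - s' ->
  target s p <= target s' s.
Proof.
  intros. unfold target, Rdiv. apply Rmult_le_compat.
  - nra.
  - apply Rlt_le, Rinv_0_lt_compat. nra.
  - apply Rmult_le_compat; nra.
  - apply Rinv_le_contravar; nra.
Qed.

Lemma target_mul_le s p : 0 < s <= 1 -> s <= p ->
  target s p * ((1 + s) / (2 * s)) <= (p ^ 2 - s ^ 2) / (4 * s ^ 3).
Proof.
  intros Hs Hsp. pose proof (target_le_half s p ltac:(lra) Hsp).
  pose proof (target_nonneg s p Hs Hsp).
  assert (0 <= (1 + s) / (2 * s) <= / s).
  { split; [apply Rlt_le, Rdiv_lt_0_compat; lra|].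
    apply Rle_div_l; [lra|]. replace (/ s * (2 * s)) with 2 by (field; lra). lra. }
  apply Rle_trans with ((p - s) / (2 * s) * / s); [apply Rmult_le_compat; lra|].
  assert (Hgap : (p ^ 2 - s ^ 2) / (4 * s ^ 3) - (p - s) / (2 * s) * / s
                 = (p - s) ^ 2 / (4 * s ^ 3)) by (field; lra).
  assert (0 <= (p - s) ^ 2 / (4 * s ^ 3)).
  { apply Rmult_le_pos; [nra|].
    apply Rlt_le, Rinv_0_lt_compat. pose proof (pow_lt s 3 ltac:(lra)). lra. }
  lra.
Qed.

Section Chain.
Variables (s : nat -> R) (a : R) (n0 N : nat).
Hypothesis n0_lt_N : (n0 < N)%nat.
Hypothesis a_pos : 0 < a.
Hypothesis s_range : forall i, (n0 <= i <= N)%nat -> 0 < s i <= 1.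
Hypothesis s_step : forall i, (n0 <= i < N)%nat -> s i ^ 2 = s (S i) ^ 2 + a.
Hypothesis a_le_cube : a <= s N ^ 3.
Hypothesis s_start : / 2 <= s n0.

Lemma chain_sq i : (n0 <= i <= N)%nat -> s i ^ 2 = s N ^ 2 + INR (N - i) * a.
Proof.
  remember (N - i)%nat as k eqn:Hk. revert i Hk.
  induction k as [|k IH]; intros i Hk Hi.
  - replace i with N by lia. cbn. lra.
  - rewrite s_step, (IH (S i)) by lia. rewrite S_INR. lra.
Qed.

Lemma chain_le_last i : (n0 <= i <= N)%nat -> s N <= s i.
Proof.
  intro Hi. pose proof (chain_sq i Hi). pose proof (pos_INR (N - i)).
  destruct (s_range i Hi), (s_range N ltac:(lia)). nra.
Qed.

Lemma a_le_sq_last : a <= s N ^ 2.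
Proof. destruct (s_range N ltac:(lia)). nra. Qed.

Lemma chain_pred i : (n0 < i <= N)%nat -> s (pred i) ^ 2 = s i ^ 2 + a.
Proof. intro Hi. replace i with (S (pred i)) at 2 by lia. apply s_step. lia. Qed.

Lemma chain_pred_bounds i : (n0 < i <= N)%nat -> s i <= s (pred i) <= 2 * s i.
Proof.
  intro Hi. pose proof (chain_pred i Hi). pose proof a_le_sq_last.
  pose proof (chain_le_last i ltac:(lia)).
  destruct (s_range i ltac:(lia)), (s_range (pred i) ltac:(lia)), (s_range N ltac:(lia)).
  split; nra.
Qed.

Lemma target_chain_mono i : (n0 < i < N)%nat ->
  target (s i) (s (pred i)) <= target (s (S i)) (s i).
Proof.
  intro Hi. pose proof (chain_pred i ltac:(lia)) as Hp. pose proof (s_step i ltac:(lia)) as Hs.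
  pose proof (chain_pred_bounds i ltac:(lia)). pose proof (chain_pred_bounds (S i) ltac:(lia)).
  change (pred (S i)) with i in *.
  destruct (s_range i ltac:(lia)), (s_range (S i) ltac:(lia)).
  apply target_antimono; try lra. nra.
Qed.

Lemma sum_target_le :
  sum_range (S n0) N (fun i => target (s i) (s (pred i))) <= - / 2 * ln (s N) + / 8.
Proof.
  set (Phi := fun i => / 2 * ln (s i) - a / 8 * / s i ^ 2).
  apply Rle_trans with (Phi n0 - Phi N).
  - apply sum_range_telescope_le; [lia|]. intros i Hi.
    pose proof (chain_pred i Hi) as Hp. destruct (chain_pred_bounds i Hi).
    destruct (s_range i ltac:(lia)). unfold Phi.
    eapply Rle_trans; [apply target_le_log; lra|]. rewrite Hp. right. unfold Rdiv. ring.
  - unfold Phi. destruct (s_range n0 ltac:(lia)), (s_range N ltac:(lia)).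
    assert (ln (s n0) <= 0) by (rewrite <- ln_1; apply ln_le; lra).
    assert (0 <= a / 8 * / s n0 ^ 2).
    { apply Rmult_le_pos; [lra|]. apply Rlt_le, Rinv_0_lt_compat, pow_lt. lra. }
    assert (a * / s N ^ 2 <= 1)
      by (apply Rle_div_l; [apply pow_lt|]; pose proof a_le_sq_last; lra).
    lra.
Qed.

Lemma sum_target_ge :
  - / 2 * ln (s N) - 2 <= sum_range (S n0) N (fun i => target (s i) (s (pred i))).
Proof.
  set (Psi := fun i => / 2 * ln (s i) - 3 / 2 * s i).
  apply Rle_trans with (Psi n0 - Psi N).
  - unfold Psi. destruct (s_range n0 ltac:(lia)), (s_range N ltac:(lia)).
    pose proof (ln_ge_1_sub_inv (s n0) ltac:(lra)).
    assert (/ s n0 <= 2) by (rewrite <- (Rinv_inv 2); apply Rinv_le_contravar; lra).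
    lra.
  - apply sum_range_telescope_ge; [lia|]. intros i Hi.
    destruct (chain_pred_bounds i Hi). destruct (s_range i ltac:(lia)).
    unfold Psi. eapply Rle_trans; [|apply target_ge_log; lra]. right. ring.
Qed.

Lemma gam_chain_range i : (n0 < i <= N)%nat -> 0 <= gam (s i) <= gam (s N).
Proof.
  intro Hi. destruct (s_range i ltac:(lia)), (s_range N ltac:(lia)).
  pose proof (chain_le_last i ltac:(lia)). apply gam_range; lra.
Qed.

Lemma gam_last_le_1 : gam (s N) <= 1.
Proof.
  destruct (s_range N ltac:(lia)). pose proof (one_sub_gam (s N) ltac:(lra)).
  assert (0 <= 2 * s N / (1 + s N)) by (apply Rlt_le, Rdiv_lt_0_compat; lra). lra.
Qed.

Lemma target_chain_nonneg i : (n0 < i <= N)%nat -> 0 <= target (s i) (s (pred i)).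
Proof.
  intro Hi. destruct (chain_pred_bounds i Hi). apply target_nonneg; [apply s_range; lia | lra].
Qed.

Variable T : nat -> R.
Hypothesis T_start : T n0 = 0.
Hypothesis T_step : forall i, (n0 <= i < N)%nat ->
  T (S i) = (gam (s (S i)) - (1 - s (S i)) / (1 + s i)) + gam (s (S i)) * T i.

Lemma T_step_average i : (n0 <= i < N)%nat ->
  T (S i) = (1 - gam (s (S i))) * target (s (S i)) (s i) + gam (s (S i)) * T i.
Proof.
  intro Hi. rewrite T_step by lia.
  destruct (s_range i ltac:(lia)), (s_range (S i) ltac:(lia)).
  rewrite delta_as_average by lra. ring.
Qed.

Lemma T_le_target i : (n0 < i <= N)%nat -> T i <= target (s i) (s (pred i)).
Proof.
  apply (average_le_target (fun i => target (s i) (s (pred i))) (fun i => gam (s i)) T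
           (gam (s N)) n0 N T_start T_step_average gam_chain_range target_chain_nonneg
           target_chain_mono).
Qed.

Lemma sum_lag_le :
  sum_range (S n0) N (fun i => target (s i) (s (pred i)) - T i) <= / 4.
Proof.
  set (u := fun i => target (s i) (s (pred i))).
  change (sum_range (S n0) N (fun i => u i - T i) <= / 4).
  destruct (s_range N ltac:(lia)) as [HsN0 HsN1].
  pose proof (lag_sum_le u (fun i => gam (s i)) T (gam (s N)) n0 N T_start T_step_average
                gam_chain_range gam_last_le_1 target_chain_nonneg target_chain_mono n0_lt_N)
    as Hlag.
  rewrite one_sub_gam in Hlag by lra.
  apply Rle_trans with (u N * ((1 + s N) / (2 * s N))).
  - replace (sum_range (S n0) N (fun i => u i - T i))
      with (2 * s N / (1 + s N) * sum_range (S n0) N (fun i => u i - T i)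
            * ((1 + s N) / (2 * s N))) by (field; lra).
    apply Rmult_le_compat_r; [apply Rlt_le, Rdiv_lt_0_compat; lra | exact Hlag].
  - destruct (chain_pred_bounds N ltac:(lia)).
    eapply Rle_trans; [apply target_mul_le; lra|]. rewrite (chain_pred N ltac:(lia)).
    apply Rle_div_l; [pose proof (pow_lt (s N) 3 HsN0); lra | lra].
Qed.

Lemma chain_average_bound :
  - / 2 * ln (s N) - 3 <= sum_range (S n0) N T <= - / 2 * ln (s N) + 1.
Proof.
  pose proof sum_target_le. pose proof sum_target_ge. pose proof sum_lag_le.
  assert (sum_range (S n0) N T <= sum_range (S n0) N (fun i => target (s i) (s (pred i))))
    by (apply sum_range_le; intros; apply T_le_target; lia).
  rewrite sum_range_minus in *. lra.
Qed.

End Chain.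

Lemma T_delta_S w N i : (2 <= i)%nat ->
  T_delta w N (S i)
  = (gam (sq_i w N (S i)) - (1 - sq_i w N (S i)) / (1 + sq_i w N i))
    + gam (sq_i w N (S i)) * T_delta w N i.
Proof.
  intro Hi. unfold T_delta. rewrite sum_prod_range_S by lia.
  unfold delta_. now replace (S i - 1)%nat with i by lia.
Qed.

Section ConcreteChain.
Variables (w : nat -> R) (N : nat).
Hypothesis N_ge_3 : (3 <= N)%nat.
Hypothesis eps_pos : 0 < theta w N - 1.
Hypothesis eps_le_1 : theta w N - 1 <= 1.
Hypothesis inv_N_le_eps : / INR N <= theta w N - 1.
Hypothesis eps_cube_ge : 1 <= INR N ^ 2 * (theta w N - 1) ^ 3.

Local Notation s := (sq_i w N).
Local Notation th := (theta w N).
Local Notation a := (/ (INR N * theta w N ^ 2)).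

Lemma INR_N_ge_3 : 3 <= INR N.
Proof. replace 3 with (INR 3) by (simpl; lra). now apply le_INR. Qed.

Lemma sq_i_sq i : (1 <= i <= N)%nat -> s i ^ 2 = 1 - (INR i - 1) * a.
Proof.
  intro Hi. pose proof INR_N_ge_3. pose proof (le_INR _ _ (proj2 Hi)).
  assert (1 <= INR i) by (replace 1 with (INR 1) by reflexivity; apply le_INR; lia).
  assert (1 <= th ^ 2) by nra.
  unfold sq_i. rewrite pow2_sqrt; [unfold Rdiv; ring|].
  assert ((INR i - 1) / (INR N * th ^ 2) <= 1) by (apply Rle_div_l; nra).
  lra.
Qed.

Lemma sq_i_step i : (2 <= i < N)%nat -> s i ^ 2 = s (S i) ^ 2 + a.
Proof. intro Hi. rewrite !sq_i_sq by lia. rewrite S_INR. ring. Qed.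

Lemma sq_i_range i : (2 <= i <= N)%nat -> 0 < s i <= 1.
Proof.
  intro Hi. pose proof INR_N_ge_3. pose proof (sq_i_sq i ltac:(lia)).
  pose proof (le_INR _ _ (proj2 Hi)).
  pose proof (sqrt_pos (1 - (INR i - 1) / (INR N * th ^ 2))).
  assert (2 <= INR i) by (replace 2 with (INR 2) by reflexivity; apply le_INR; lia).
  assert (1 <= th ^ 2) by nra.
  assert (0 < a) by (apply Rinv_0_lt_compat; nra).
  assert ((INR i - 1) * a < 1).
  { apply Rle_lt_trans with ((INR N - 1) * a); [nra|].
    assert (INR N * a <= 1).
    { replace (INR N * a) with (/ th ^ 2) by (field; split; lra).
      rewrite <- Rinv_1. apply Rinv_le_contravar; lra. }
    nra. }
  unfold sq_i in *. split; nra.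
Qed.

Lemma sq_N_theta : s N ^ 2 * th ^ 2 = th ^ 2 - 1 + / INR N.
Proof.
  pose proof INR_N_ge_3. rewrite sq_i_sq by lia. field. split; lra.
Qed.

Lemma a_le_sq_N_cube : a <= s N ^ 3.
Proof.
  pose proof INR_N_ge_3. pose proof sq_N_theta. destruct (sq_i_range N ltac:(lia)).
  assert (0 < / INR N) by (apply Rinv_0_lt_compat; lra).
  set (z := s N ^ 3 * (INR N * th ^ 2)).
  assert (Hz : z ^ 2 * th ^ 2 = (th ^ 2 - 1 + / INR N) ^ 3 * INR N ^ 2).
  { unfold z. rewrite <- sq_N_theta. ring. }
  assert (Hcube : (2 * (th - 1)) ^ 3 <= (th ^ 2 - 1 + / INR N) ^ 3) by (apply pow_incr; nra).
  assert (8 <= z ^ 2 * th ^ 2).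
  { rewrite Hz. assert (0 < INR N ^ 2) by nra. nra. }
  assert (1 <= z).
  { assert (0 <= z) by (unfold z; pose proof (pow_lt (s N) 3 ltac:(lra)); nra).
    destruct (Rle_lt_dec 1 z) as [|Hz1]; [assumption|].
    assert (z ^ 2 * th ^ 2 <= 1 * th ^ 2) by (apply Rmult_le_compat_r; nra). nra. }
  replace a with (1 / (INR N * th ^ 2)) by (unfold Rdiv; ring).
  apply Rle_div_l; [nra|]. unfold z in *. lra.
Qed.

Lemma sq_2_ge_half : / 2 <= s 2.
Proof.
  pose proof INR_N_ge_3. pose proof (sq_i_sq 2 ltac:(lia)). destruct (sq_i_range 2 ltac:(lia)).
  assert (a <= / 3).
  { apply Rinv_le_contravar; [lra|]. nra. }
  simpl INR in *. nra.
Qed.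

Lemma total_T_sq_N_bound :
  - / 2 * ln (s N) - 3 <= total_T w N <= - / 2 * ln (s N) + 1.
Proof.
  pose proof INR_N_ge_3.
  apply (chain_average_bound s a 2 N); try lia.
  - apply Rinv_0_lt_compat. nra.
  - exact sq_i_range.
  - exact sq_i_step.
  - exact a_le_sq_N_cube.
  - exact sq_2_ge_half.
  - reflexivity.
  - intros i Hi. apply T_delta_S. lia.
Qed.

Lemma sq_N_bounds : (th - 1) / 2 <= s N ^ 2 <= 4 * (th - 1).
Proof.
  pose proof INR_N_ge_3. pose proof sq_N_theta.
  assert (1 <= th ^ 2 <= 4) by nra.
  assert (0 < / INR N) by (apply Rinv_0_lt_compat; lra).
  assert (s N ^ 2 * 1 <= s N ^ 2 * th ^ 2 <= s N ^ 2 * 4)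
    by (split; apply Rmult_le_compat_l; nra).
  split; [apply Rle_div_l|]; nra.
Qed.

Lemma total_T_eps_bound : Rabs (total_T w N + ln (th - 1) / 4) <= 4.
Proof.
  pose proof total_T_sq_N_bound. destruct (sq_N_bounds) as [Hlo Hhi].
  destruct (sq_i_range N ltac:(lia)).
  assert (Hln : ln (s N ^ 2) = 2 * ln (s N)) by (rewrite ln_pow by lra; simpl; ring).
  assert (ln ((th - 1) / 2) <= 2 * ln (s N)) by (rewrite <- Hln; apply ln_le; lra).
  assert (2 * ln (s N) <= ln (4 * (th - 1))) by (rewrite <- Hln; apply ln_le; [nra | lra]).
  rewrite ln_div in * by lra. rewrite ln_mult in * by lra.
  assert (Hln4 : ln 4 = 2 * ln 2) by (replace 4 with (2 * 2) by ring; rewrite ln_mult; lra).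
  pose proof ln_lt_2. assert (ln 2 <= 1) by (pose proof (ln_le_sub_1 2); lra).
  apply Rabs_le. lra.
Qed.

End ConcreteChain.

Lemma sixth_root x : 0 < x ->
  exists r, 0 < r /\ x = r ^ 6 /\ Rpower x (- (2 / 3)) = / r ^ 4.
Proof.
  intro Hx. exists (Rpower x (/ 6)).
  assert (Hr : 0 < Rpower x (/ 6)) by apply exp_pos.
  rewrite <- !Rpower_pow, !Rpower_mult, <- Rpower_Ropp by exact Hr.
  repeat split; [exact Hr | | ].
  - replace (/ 6 * INR 6) with 1 by (simpl; field). now rewrite Rpower_1.
  - f_equal. simpl. field.
Qed.

Lemma total_T_estimate w N : 6 ^ 6 <= INR N ->
  ln (ln (INR N)) ^ 2 <= w N <= ln (INR N) ^ 2 ->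
  Rabs (total_T w N - ln (INR N) / 6) <= 5 * ln (ln (INR N)).
Proof.
  intros HN [Hwlo Hwhi].
  destruct (sixth_root (INR N)) as (r & Hr & HNr & Hq); [lra|].
  assert (HL : ln (INR N) = 6 * ln r) by (rewrite HNr, ln_pow by lra; simpl; ring).
  assert (Hr6 : 6 <= r).
  { destruct (Rle_lt_dec 6 r) as [|Hlt]; [assumption|].
    pose proof (ln_increasing r 6 Hr Hlt). pose proof (ln_le (6 ^ 6) (INR N) ltac:(lra) HN).
    rewrite ln_pow in * by lra. simpl INR in *. lra. }
  set (L := ln (INR N)) in *.
  assert (HL5 : 5 <= L) by (pose proof (ln_ge_1_sub_inv r Hr);
    assert (/ r <= / 6) by (apply Rinv_le_contravar; lra); lra).
  assert (HlnL : 1 <= ln L).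
  { rewrite <- (ln_exp 1). apply ln_le; [apply exp_pos|]. pose proof exp_le_3. lra. }
  assert (Hw1 : 1 <= w N) by nra.
  assert (HLr : L <= 6 * r) by (pose proof (ln_le_sub_1 r Hr); lra).
  assert (Heps : theta w N - 1 = w N / r ^ 4) by (unfold theta; rewrite Hq; field; lra).
  assert (Hr4 : 0 < r ^ 4) by (apply pow_lt; lra).
  assert (HN3 : (3 <= N)%nat) by (apply INR_le; simpl; lra).
  assert (Hbound : Rabs (total_T w N + ln (w N / r ^ 4) / 4) <= 4).
  { rewrite <- Heps. apply total_T_eps_bound; [exact HN3 | rewrite Heps .. ].
    - apply Rdiv_lt_0_compat; lra.
    - apply Rle_div_l; [lra|].
      assert (L ^ 2 <= (6 * r) ^ 2) by (apply pow_incr; lra). nra.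
    - rewrite HNr. replace (/ r ^ 6) with (/ r ^ 2 / r ^ 4) by (field; lra).
      unfold Rdiv. apply Rmult_le_compat_r; [apply Rlt_le, Rinv_0_lt_compat; lra|].
      apply Rle_trans with 1; [|exact Hw1].
      rewrite <- Rinv_1. apply Rinv_le_contravar; nra.
    - rewrite HNr. replace ((r ^ 6) ^ 2 * (w N / r ^ 4) ^ 3) with (w N ^ 3) by (field; lra).
      pose proof (pow_incr 1 (w N) 3 ltac:(lra)). simpl in *. lra. }
  rewrite ln_div, ln_pow in Hbound by lra. simpl INR in Hbound.
  assert (Hlnw : 0 <= ln (w N) <= 2 * ln L).
  { split; [rewrite <- ln_1; apply ln_le; lra|].
    replace (2 * ln L) with (ln (L ^ 2)) by (rewrite ln_pow by lra; simpl; ring).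
    apply ln_le; lra. }
  apply Rabs_le. apply Rabs_le_between in Hbound. lra.
Qed.

Lemma lt_of_ratio_lt_1 x y : 0 < y -> Rabs (x / y - 0) < 1 -> x < y.
Proof.
  intros Hy H. apply Rabs_def2 in H. destruct H as [H _].
  rewrite Rminus_0_r in H. apply Rlt_div_l in H; lra.
Qed.

Theorem lemma11 (w : nat -> R)
  (hpos : forall N : nat, 0 < w N)
  (hlow : is_lim_seq (fun N : nat => (ln (ln (INR N))) ^ 2 / w N) 0)
  (hup : is_lim_seq (fun N : nat => w N / (ln (INR N)) ^ 2) 0) :
  exists (C : R) (N0 : nat), forall N : nat, (N0 <= N)%nat ->
    Rabs (total_T w N - ln (INR N) / 6) <= C * ln (ln (INR N)).
Proof.
  apply is_lim_seq_spec in hlow, hup.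
  destruct (hlow (mkposreal 1 Rlt_0_1)) as [N1 HN1].
  destruct (hup (mkposreal 1 Rlt_0_1)) as [N2 HN2].
  exists 5, (N1 + N2 + 6 ^ 6)%nat. intros N HN.
  assert (HN6 : 6 ^ 6 <= INR N).
  { replace (6 ^ 6) with (INR (6 ^ 6)) by (rewrite pow_INR; simpl; ring).
    apply le_INR. lia. }
  assert (HL : 0 < ln (INR N)) by (rewrite <- ln_1; apply ln_increasing; lra).
  apply total_T_estimate; [exact HN6|]. split.
  - apply Rlt_le, lt_of_ratio_lt_1, HN1; [apply hpos | lia].
  - apply Rlt_le, lt_of_ratio_lt_1, HN2; [apply pow_lt, HL | lia].
Qed.
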